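(* Let $n,d$ be positive integers, $\mathbf{c}\in\mathbb{Z}^n_{+}$, and $\mathbb{P}\subseteq[0,d]^n$ a bounded polyhedron with $\mathbb{P}\cap\mathbb{Z}^n\neq\emptyset$. Let $\mathbf{z}^\star=(z_0,\dots,z_n)$ be a lexicographically maximum element of $\{(\mathbf{c}^\top\mathbf{x},x_1,\dots,x_n):\mathbf{x}\in\mathbb{P}\}$ and let $\mathbf{x}^\star=(x_0,\dots,x_n)$ be a lexicographically maximum element of $\{(\mathbf{c}^\top\mathbf{x},x_1,\dots,x_n):\mathbf{x}\in\mathbb{P}\cap\mathbb{Z}^n\}$. Then $$\Big(d\sum_{i=1}^n\min(0,c_i),0,\dots,0\Big)\le_L \mathbf{x}^\star\le_L \alpha(\mathbf{z}^\star).$$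
   Context: Lexicographic order on $\mathbb{R}^{n+1}$: $\mathbf{x}<_L\mathbf{y}$ if there is $k\in\{0,\dots,n\}$ with $x_k<y_k$ and $x_i=y_i$ for all $i<k$; $\mathbf{x}\le_L\mathbf{y}$ means $\mathbf{x}<_L\mathbf{y}$ or $\mathbf{x}=\mathbf{y}$. A lexicographically maximum element of a set $T$ is some $\mathbf{t}\in T$ with $\mathbf{s}\le_L\mathbf{t}$ for all $\mathbf{s}\in T$. For $\mathbf{y}=(y_0,\dots,y_n)\in\mathbb{R}\times[0,d]^n$, define the integral vector $\alpha(\mathbf{y})$ by $\alpha(\mathbf{y})_i=\lfloor y_i\rfloor$ if $i\le k$ and $\alpha(\mathbf{y})_i=d$ if $i>k$, where $k=\min\{j\in\{0,\dots,n\}: y_j\notin\mathbb{Z}\}$; if $\mathbf{y}$ is integral, $\alpha(\mathbf{y})=\mathbf{y}$. *)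

From HB Require Import structures.
From mathcomp Require Import all_boot all_order all_algebra.
From mathcomp Require Import reals.
Set Implicit Arguments. Unset Strict Implicit. Unset Printing Implicit Defensive.
Import Order.TTheory GRing.Theory Num.Theory.
Local Open Scope ring_scope.

Section Defs.
Variable R : realType.

Definition lexlt N (x y : 'I_N -> R) : Prop :=
  exists k : 'I_N, x k < y k /\ forall i : 'I_N, (i < k)%N -> x i = y i.
Definition lexle N (x y : 'I_N -> R) : Prop := lexlt x y \/ x = y.

Definition lexmax N (T : ('I_N -> R) -> Prop) (t : 'I_N -> R) : Prop :=
  T t /\ forall s, T s -> lexle s t.

Definition in_poly m n (A : 'M[R]_(m, n)) (b : 'cV[R]_m) (x : 'I_n -> R) : Prop :=
  forall i : 'I_m, \sum_(j < n) A i j * x j <= b i 0.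

Definition intvec n (x : 'I_n -> R) : Prop := forall i, x i \is a Num.int.

Definition cdot n (c : 'I_n -> int) (x : 'I_n -> R) : R :=
  \sum_(i < n) (c i)%:~R * x i.

(* (c^T x, x_1, ..., x_n) ; index 0 is c^T x, index j+1 is x_{j+1} *)
Definition ext n (c : 'I_n -> int) (x : 'I_n -> R) : 'I_n.+1 -> R :=
  fun i => if unlift ord0 i is Some j then x j else cdot c x.

(* alpha(y): k = min index with y_k non-integral (k = n+1 if none) *)
Definition alpha_k n (y : 'I_n.+1 -> R) : nat :=
  \big[minn/n.+1]_(j : 'I_n.+1 | y j \isn't a Num.int) (j : nat).
Definition alpha n (d : nat) (y : 'I_n.+1 -> R) : 'I_n.+1 -> R :=
  fun i => if (i <= alpha_k y)%N then (Num.floor (y i))%:~R else d%:R.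

Definition lowvec n (d : nat) (c : 'I_n -> int) : 'I_n.+1 -> R :=
  fun i => if i == ord0 then d%:R * \sum_(j < n) (Num.min 0 (c j))%:~R else 0.
End Defs.

(** Both bounds are pointwise comparisons turned into lexicographic ones.
    Since [c >= 0] and [P] lies in the nonnegative orthant, the lower vector is
    [0] and every point [(c^T x, x)] is nonnegative.  For the upper bound, [xs]
    is an integral vector with [xs_i <= d] for [i >= 1] and [xs <=_L zs].  Let
    [k] be the first non-integral index of [zs], so that [alpha zs] agrees with
    [zs] before [k].  If [xs] and [zs] first differ before [k], that index also
    witnesses [xs <_L alpha zs]; otherwise [xs_i <= zs_i] for [i <= k], so
    integrality gives [xs_i <= floor zs_i], while [xs_i <= d = (alpha zs)_i]
    beyond [k]: hence [xs <= alpha zs] pointwise. *)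
From HB Require Import structures.
From mathcomp Require Import all_boot all_order all_algebra.
From mathcomp Require Import reals.
From Stdlib Require Import FunctionalExtensionality.
Import Order.TTheory GRing.Theory Num.Theory.
Local Open Scope ring_scope.

Lemma lexle_pointwise (R : realType) N (v w : 'I_N -> R) :
  (forall i, v i <= w i) -> lexle v w.
Proof.
move=> le_vw; case: (boolP [exists i, v i != w i]) => [/existsP [i0 ne_i0]|].
- left; have [k ne_k min_k] :=
    @arg_minnP _ i0 (fun i => v i != w i) (fun i : 'I_N => i : nat) ne_i0.
  exists k; split; first by rewrite lt_neqAle ne_k le_vw.
  move=> i lt_ik; apply/eqP/negPn/negP => /min_k.
  by rewrite leqNgt lt_ik.
- move/existsPn => eq_vw; right; apply: functional_extensionality => i.
  by apply/eqP; rewrite -[_ == _]negbK eq_vw.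
Qed.

Section Alpha.
Variables (R : realType) (n d : nat) (y : 'I_n.+1 -> R).

Lemma alpha_k_le (j : 'I_n.+1) : y j \isn't a Num.int -> (alpha_k y <= j)%N.
Proof.
move=> y_j; rewrite /alpha_k -minEnat.
exact: (bigmin_le_cond _ (fun i : 'I_n.+1 => i : nat) y_j).
Qed.

Lemma int_lt_alpha_k (i : 'I_n.+1) : (i < alpha_k y)%N -> y i \is a Num.int.
Proof.
by move=> lt_ik; apply: contraTT lt_ik => /alpha_k_le; rewrite leqNgt.
Qed.

Lemma alpha_lt_alpha_k (i : 'I_n.+1) : (i < alpha_k y)%N -> alpha d y i = y i.
Proof.
move=> lt_ik; rewrite /alpha ltnW //.
by apply/eqP; rewrite -intrEfloor int_lt_alpha_k.
Qed.

Lemma int_le_alpha (v : 'I_n.+1 -> R) :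
  (forall i, v i \is a Num.int) -> (forall i, i != ord0 -> v i <= d%:R) ->
  (forall i : 'I_n.+1, (i <= alpha_k y)%N -> v i <= y i) ->
  forall i, v i <= alpha d y i.
Proof.
move=> v_int v_le_d v_le_y i; rewrite /alpha.
case: leqP => [le_ik | lt_ki].
- have := v_int i; rewrite intrEfloor => /eqP v_i.
  by rewrite -v_i ler_int floor_ge_int v_i ?v_le_y.
- by apply: v_le_d; apply: contraTneq lt_ki => ->.
Qed.

Lemma lexle_alpha (v : 'I_n.+1 -> R) :
  (forall i, v i \is a Num.int) -> (forall i, i != ord0 -> v i <= d%:R) ->
  lexle v y -> lexle v (alpha d y).
Proof.
move=> v_int v_le_d [[j [lt_j eq_lt_j]] | eq_vy]; last first.
  by apply: lexle_pointwise; apply: int_le_alpha => // i _; rewrite eq_vy.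
case: (ltnP j (alpha_k y)) => [lt_jk | le_kj].
- left; exists j; rewrite alpha_lt_alpha_k //; split=> // i lt_ij.
  by rewrite alpha_lt_alpha_k ?eq_lt_j //; apply: ltn_trans lt_jk.
- apply: lexle_pointwise; apply: int_le_alpha => // i le_ik.
  case: (ltngtP i j) => [lt_ij | lt_ji | /val_inj ->].
  + by rewrite eq_lt_j.
  + by move: (leq_trans le_ik le_kj); rewrite leqNgt lt_ji.
  + exact: ltW.
Qed.

End Alpha.

Section Objective.
Variables (R : realType) (n : nat) (c : 'I_n -> int).
Hypothesis c_ge0 : forall j, 0 <= c j.

Lemma lowvec_eq0 (d : nat) i : lowvec R d c i = 0.
Proof.
rewrite /lowvec; case: ifP => // _.
by rewrite big1 ?mulr0 // => j _; rewrite min_l.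
Qed.

Lemma ext_ge0 (x : 'I_n -> R) : (forall j, 0 <= x j) -> forall i, 0 <= ext c x i.
Proof.
move=> x_ge0 i; rewrite /ext; case: unliftP => [j _ | _] //.
by apply: sumr_ge0 => j _; rewrite mulr_ge0 ?ler0z.
Qed.

Lemma ext_int (x : 'I_n -> R) :
  intvec x -> forall i, ext c x i \is a Num.int.
Proof.
move=> x_int i; rewrite /ext; case: unliftP => [j _ | _] //.
by apply: rpred_sum => j _; rewrite rpredM ?rpred_int.
Qed.

Lemma ext_le (x : 'I_n -> R) (u : R) :
  (forall j, x j <= u) -> forall i, i != ord0 -> ext c x i <= u.
Proof.
by move=> x_le i; rewrite /ext; case: unliftP => [j _ | ->].
Qed.

End Objective.

Theorem lemma1 (R : realType) (n d m : nat) (c : 'I_n -> int)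
    (A : 'M[R]_(m, n)) (b : 'cV[R]_m) (zs xs : 'I_n.+1 -> R) :
  (0 < n)%N -> (0 < d)%N ->
  (forall i, 0 <= c i) ->
  (forall x, in_poly A b x -> forall i, 0 <= x i <= d%:R) ->
  (exists x, in_poly A b x /\ intvec x) ->
  lexmax (fun y => exists x, in_poly A b x /\ y = ext c x) zs ->
  lexmax (fun y => exists x, in_poly A b x /\ intvec x /\ y = ext c x) xs ->
  lexle (lowvec R d c) xs /\ lexle xs (alpha d zs).
Proof.
move=> _ _ c_ge0 box _ [_ zs_max] [[x [P_x [x_int ->]]] _].
have [x_ge0 x_le_d] : (forall j, 0 <= x j) /\ (forall j, x j <= d%:R).
  by split=> j; case/andP: (box x P_x j).
split.
- apply: lexle_pointwise => i.
  by rewrite lowvec_eq0 // ext_ge0.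
- apply: lexle_alpha; [exact: ext_int | exact: ext_le |].
  by apply: zs_max; exists x.
Qed.
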